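(* Let $D,\chi,\varepsilon>0$, $a\ge0$, $\beta\ge 0$, $b=D\beta^2$, and let $0<r_0<r_1$. Suppose $\rho\in C^0[0,\infty)$, $\phi\in C^2[0,\infty)$ satisfy $\rho(0)=0$, $\phi(0)\ge 0$, $\rho>0$ on $(r_0,r_1)$, $\rho\equiv0$ on $[0,r_0]\cup[r_1,\infty)$, $D\phi_{rr}+D\frac{\phi_r}{r}+a\rho-b\phi=0$ on $(0,\infty)$, and on $(r_0,r_1)$ the relation $\varepsilon\rho=\chi\phi+K$ holds for a constant $K$. If $K=0$ and $\phi_r(r_0)=\phi_r(r_1)=0$, then no such solution exists (i.e. there is no nontrivial solution of this form).
   Context: The relation $\varepsilon\rho=\chi\phi+K$ on the positivity region is the integrated form of the equation $\partial_r(\frac{\varepsilon}{2}\rho^2)=\chi\rho\phi_r$ from the radially symmetric stationary form of a hyperbolic-parabolic chemotaxis model on $\mathbb{R}^2$ with pressure $p(\rho)=\frac{\varepsilon}{2}\rho^2$. *)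

From Stdlib Require Import Reals.
From Coquelicot Require Import Coquelicot.
Open Scope R_scope.

Definition nonneg (x : R) : Prop := 0 <= x.

Definition continuous_on_nonneg (f : R -> R) : Prop :=
  forall r, 0 <= r -> filterlim f (within nonneg (locally r)) (locally (f r)).

Definition has_derive_on_nonneg (f f' : R -> R) : Prop :=
  forall r, 0 <= r ->
    filterlim (fun x => (f x - f r) / (x - r))
      (within (fun x => 0 <= x /\ x <> r) (locally r)) (locally (f' r)).

Definition C2_nonneg_with (phi phi1 phi2 : R -> R) : Prop :=
  has_derive_on_nonneg phi phi1 /\ has_derive_on_nonneg phi1 phi2 /\
  continuous_on_nonneg phi2.

(** On (r0, r1) the relation with K = 0 makes phi a positive multiple of rho,
    so the flux r phi_r has derivative lambda r rho for a constant lambda.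
    The flux vanishes at both ends, so by the mean value theorem lambda = 0;
    hence the flux, then phi_r, vanish on (r0, r1), so phi and with it rho are
    constant there. A positive constant cannot be the right limit of rho at r0,
    where rho vanishes. *)

From Pilot Require Import Defs.
From Stdlib Require Import Reals Lra.
From Coquelicot Require Import Coquelicot.
Open Scope R_scope.

Lemma filterlim_within_locally_R (f : R -> R) (P : R -> Prop) (r l : R) :
  filterlim f (within P (locally r)) (locally l) ->
  forall e, 0 < e ->
  exists d, 0 < d /\ forall y, Rabs (y - r) < d -> P y -> Rabs (f y - l) < e.
Proof.
  intros Hf e He.
  destruct (Hf _ (locally_ball l (mkposreal e He))) as [d Hd].
  exists d. split.
  - apply cond_pos.
  - intros y Hy HPy. exact (Hd y Hy HPy).
Qed.

Lemma has_derive_on_nonneg_derivable_pt_lim (f f' : R -> R) (r : R) :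
  has_derive_on_nonneg f f' -> 0 < r -> derivable_pt_lim f r (f' r).
Proof.
  intros Hf Hr e He.
  destruct (filterlim_within_locally_R _ _ _ _ (Hf r (Rlt_le _ _ Hr)) e He)
    as [d [Hd Hquot]].
  assert (Hdr : 0 < Rmin d r) by (apply Rmin_pos; lra).
  exists (mkposreal _ Hdr). simpl. intros h Hh0 Hh.
  pose proof (Rmin_l d r). pose proof (Rmin_r d r).
  destruct (Rabs_def2 _ _ Hh).
  specialize (Hquot (r + h)). replace (r + h - r) with h in Hquot by ring.
  apply Hquot; [lra | split; lra].
Qed.

Lemma continuous_on_nonneg_const_right (f : R -> R) (x0 x1 C : R) :
  continuous_on_nonneg f -> 0 <= x0 -> x0 < x1 ->
  (forall x, x0 < x < x1 -> f x = C) ->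
  f x0 = C.
Proof.
  intros Hf Hx0 Hx01 HC.
  apply (filterlim_locally_unique (F := at_right x0) f).
  - apply filterlim_filter_le_1 with (2 := Hf x0 Hx0).
    intros P [d Hd]. exists d. intros y Hy Hxy.
    apply Hd; [exact Hy | unfold Defs.nonneg; lra].
  - apply filterlim_ext_loc with (fun _ => C).
    + assert (Hd : 0 < x1 - x0) by lra.
      exists (mkposreal _ Hd). intros y Hy Hxy. symmetry. apply HC.
      apply Rabs_lt_between' in Hy. simpl in Hy. lra.
    + apply filterlim_const.
Qed.

Lemma derivable_pt_lim_factor_eq0 (f f' g : R -> R) (lam x0 x1 : R) :
  x0 < x1 ->
  (forall c, x0 <= c <= x1 -> derivable_pt_lim f c (f' c)) ->
  (forall c, x0 < c < x1 -> f' c = lam * g c) ->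
  (forall c, x0 < c < x1 -> 0 < g c) ->
  f x0 = f x1 -> lam = 0.
Proof.
  intros Hx01 Hf Hf' Hg Hfx.
  destruct (MVT_cor2 f f' x0 x1 Hx01 Hf) as [c [Hmvt Hc]].
  rewrite Hf' in Hmvt by exact Hc.
  assert (Hprod : lam * (g c * (x1 - x0)) = 0) by lra.
  apply Rmult_integral in Hprod as [Hlam | Hgc]; [exact Hlam |].
  apply Rmult_integral in Hgc as [Hgc | Hgc]; [specialize (Hg c Hc) |]; lra.
Qed.

Lemma derivable_pt_lim_eq0_const (f f' : R -> R) (x0 x1 : R) :
  (forall c, x0 <= c <= x1 -> derivable_pt_lim f c (f' c)) ->
  (forall c, x0 < c < x1 -> f' c = 0) ->
  forall x, x0 <= x <= x1 -> f x = f x0.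
Proof.
  intros Hf Hf' x Hx.
  destruct (Req_dec x x0) as [-> | Hxx0]; [reflexivity |].
  destruct (MVT_cor2 f f' x0 x) as [c [Hmvt Hc]]; [lra | intros c Hc; apply Hf; lra |].
  rewrite Hf' in Hmvt by lra. lra.
Qed.

Lemma radial_flux_derivable_pt_lim (D a b : R) (rho phi phi_r phi_rr : R -> R) (x : R) :
  D <> 0 -> has_derive_on_nonneg phi_r phi_rr ->
  (forall r, 0 < r ->
     D * phi_rr r + D * (phi_r r / r) + a * rho r - b * phi r = 0) ->
  0 < x ->
  derivable_pt_lim (fun y => y * phi_r y) x (x * (b * phi x - a * rho x) / D).
Proof.
  intros HD Hphi_r Hode Hx.
  replace (x * (b * phi x - a * rho x) / D) with (1 * phi_r x + x * phi_rr x).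
  - apply (derivable_pt_lim_mult id phi_r x).
    + apply derivable_pt_lim_id.
    + exact (has_derive_on_nonneg_derivable_pt_lim _ _ _ Hphi_r Hx).
  - specialize (Hode x Hx).
    replace (b * phi x - a * rho x) with (D * phi_rr x + D * (phi_r x / x)) by lra.
    field. split; lra.
Qed.

Lemma proportional_neumann_phi_r_eq0 (D a b k r0 r1 : R)
    (rho phi phi_r phi_rr : R -> R) :
  D <> 0 -> 0 < r0 -> r0 < r1 ->
  has_derive_on_nonneg phi_r phi_rr ->
  (forall r, 0 < r ->
     D * phi_rr r + D * (phi_r r / r) + a * rho r - b * phi r = 0) ->
  (forall r, r0 < r < r1 -> 0 < rho r) ->
  (forall r, r0 < r < r1 -> phi r = k * rho r) ->
  phi_r r0 = 0 -> phi_r r1 = 0 ->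
  forall r, r0 < r < r1 -> phi_r r = 0.
Proof.
  intros HD Hr0 Hr01 Hphi_r Hode Hrho_pos Hphi_rho Hd0 Hd1.
  set (flux := fun x => x * phi_r x).
  set (lam := (b * k - a) / D).
  assert (Hflux : forall c, r0 <= c <= r1 ->
            derivable_pt_lim flux c (c * (b * phi c - a * rho c) / D)).
  { intros c Hc. apply (radial_flux_derivable_pt_lim D a b rho phi phi_r phi_rr); auto; lra. }
  assert (Hflux' : forall c, r0 < c < r1 ->
            c * (b * phi c - a * rho c) / D = lam * (c * rho c)).
  { intros c Hc. unfold lam. rewrite Hphi_rho by exact Hc. field. exact HD. }
  assert (Hlam : lam = 0).
  { apply (derivable_pt_lim_factor_eq0 flux _ (fun c => c * rho c) lam r0 r1 Hr01 Hflux Hflux').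
    - intros c Hc. apply Rmult_lt_0_compat; [lra | auto].
    - unfold flux. rewrite Hd0, Hd1. ring. }
  intros m Hm.
  assert (Hfluxm : flux m = flux r0).
  { apply (derivable_pt_lim_eq0_const _ _ r0 r1 Hflux); [| lra].
    intros c Hc. rewrite Hflux', Hlam by exact Hc. ring. }
  unfold flux in Hfluxm. rewrite Hd0, Rmult_0_r in Hfluxm.
  apply Rmult_integral in Hfluxm as [|]; lra.
Qed.

Theorem proposition7p1 (D chi eps a beta b r0 r1 K : R)
    (rho phi phi_r phi_rr : R -> R) :
  0 < D -> 0 < chi -> 0 < eps -> 0 <= a -> 0 <= beta ->
  b = D * beta ^ 2 ->
  0 < r0 -> r0 < r1 ->
  continuous_on_nonneg rho ->
  C2_nonneg_with phi phi_r phi_rr ->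
  rho 0 = 0 ->
  0 <= phi 0 ->
  (forall r, r0 < r < r1 -> 0 < rho r) ->
  (forall r, (0 <= r <= r0) \/ r1 <= r -> rho r = 0) ->
  (forall r, 0 < r ->
     D * phi_rr r + D * (phi_r r / r) + a * rho r - b * phi r = 0) ->
  (forall r, r0 < r < r1 -> eps * rho r = chi * phi r + K) ->
  K = 0 ->
  phi_r r0 = 0 -> phi_r r1 = 0 ->
  False.
Proof.
  intros HD Hchi Heps _ _ _ Hr0 Hr01 Hrho [Hphi [Hphi_r _]] _ _ Hrho_pos Hrho_zero
    Hode Hrel -> Hd0 Hd1.
  assert (Hphi_rho : forall r, r0 < r < r1 -> phi r = eps / chi * rho r).
  { intros r Hr. specialize (Hrel r Hr). field_simplify_eq; lra. }
  assert (Hphi_r0 : forall r, r0 < r < r1 -> phi_r r = 0).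
  { apply (proportional_neumann_phi_r_eq0 D a b (eps / chi) r0 r1 rho phi phi_r phi_rr);
      auto; lra. }
  assert (Hrho_const : forall r, r0 < r < r1 -> rho r = chi / eps * phi r0).
  { intros r Hr.
    assert (Hphir : phi r = phi r0).
    { apply (derivable_pt_lim_eq0_const phi phi_r r0 r); [| | lra].
      - intros c Hc. apply has_derive_on_nonneg_derivable_pt_lim; [exact Hphi | lra].
      - intros c Hc. apply Hphi_r0. lra. }
    specialize (Hrel r Hr). rewrite Hphir in Hrel. field_simplify_eq; lra. }
  assert (Hrho_r0 : rho r0 = chi / eps * phi r0).
  { apply (continuous_on_nonneg_const_right rho r0 r1); auto; lra. }
  assert (Hmid : r0 < (r0 + r1) / 2 < r1) by lra.
  specialize (Hrho_pos _ Hmid).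
  rewrite Hrho_const, <- Hrho_r0, Hrho_zero in Hrho_pos by lra.
  lra.
Qed.
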